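(* Let $(M,J)$ be a closed almost complex manifold. Then $J$ is $C^{\infty}$ pure if and only if $\pi^{1,1}\mathbf B\cap\mathbf Z^{1,1}=\mathbf B^{1,1}$, and this condition is equivalent to $\pi^{(2,0),(0,2)}\mathbf B\cap\mathbf Z^{(2,0),(0,2)}=\mathbf B^{(2,0),(0,2)}$. Consequently, $J$ being $C^{\infty}$ pure is equivalent to $\iota^{1,1}$ being injective, which is also equivalent to $\iota^{(2,0),(0,2)}$ being injective.
   Context: Real 2-forms split as $J$-invariant ($\alpha(Jv,Jw)=\alpha(v,w)$, the space $\Omega^{1,1}$) plus $J$-anti-invariant ($\alpha(Jv,Jw)=-\alpha(v,w)$, the space $\Omega^{(2,0),(0,2)}$), with projections $\pi^{1,1},\pi^{(2,0),(0,2)}$. $\mathbf Z,\mathbf B$ are the closed and exact real 2-forms; for $S=(1,1)$ or $(2,0),(0,2)$, $\mathbf Z^S=\mathbf Z\cap\Omega^S$, $\mathbf B^S=\mathbf B\cap\Omega^S$. $\iota^{S}:\mathbf Z^S/\mathbf B^S\to\pi^S\mathbf Z/\pi^S\mathbf B$ is the homomorphism induced by inclusion. $H_J^{S}(M)_{\mathbb R}=\mathbf Z^S/\mathbf B^S$, viewed as a subspace of $H^2(M;\mathbb R)$. $J$ is $C^\infty$ pure if $H_J^{1,1}(M)_{\mathbb R}\cap H_J^{(2,0),(0,2)}(M)_{\mathbb R}=0$ in $H^2(M;\mathbb R)$. *)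

(* Abstract model of the degree-2 part of the real de Rham
   complex of an almost complex manifold. *)
From HB Require Import structures.
From mathcomp Require Import all_boot all_order all_algebra.
Set Implicit Arguments. Unset Strict Implicit. Unset Printing Implicit Defensive.
Import Order.TTheory GRing.Theory Num.Theory.
Local Open Scope ring_scope.

Section AlmostComplexDeRham.
Variable R : realFieldType.
(* V1 = real 1-forms, V2 = real 2-forms, V3 = real 3-forms *)
Variables (V1 V2 V3 : lmodType R).
(* d1 : Omega^1 -> Omega^2, d2 : Omega^2 -> Omega^3 exterior derivatives *)
Variables (d1 : {linear V1 -> V2}) (d2 : {linear V2 -> V3}).
(* sigma alpha := alpha(J.,J.)  (pullback of a 2-form by J) *)
Variable sigma : {linear V2 -> V2}.

Definition Om11 (a : V2) : Prop := sigma a = a.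
Definition Om20 (a : V2) : Prop := sigma a = - a.

Definition pi11 (a : V2) : V2 := 2^-1 *: (a + sigma a).
Definition pi20 (a : V2) : V2 := 2^-1 *: (a - sigma a).

Definition Zc (a : V2) : Prop := d2 a = 0.
Definition Bx (a : V2) : Prop := exists e : V1, a = d1 e.

Definition Z11 (a : V2) : Prop := Zc a /\ Om11 a.
Definition Z20 (a : V2) : Prop := Zc a /\ Om20 a.
Definition B11 (a : V2) : Prop := Bx a /\ Om11 a.
Definition B20 (a : V2) : Prop := Bx a /\ Om20 a.

Definition piB11 (a : V2) : Prop := exists b, Bx b /\ a = pi11 b.
Definition piB20 (a : V2) : Prop := exists b, Bx b /\ a = pi20 b.

(* J is C^infty pure: H^{1,1}_J intersect H^{(2,0),(0,2)}_J = 0 in H^2 = Z/B,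
   i.e. a class represented both by a in Z^{1,1} and by b in Z^{(2,0),(0,2)}
   is zero. *)
Definition Cinf_pure : Prop :=
  forall a b : V2, Z11 a -> Z20 b -> Bx (a - b) -> Bx a.

(* iota^S : Z^S/B^S -> pi^S Z / pi^S B induced by inclusion is injective:
   [z1] = [z2] in the target (z1 - z2 in pi^S B) implies [z1] = [z2] in the
   source (z1 - z2 in B^S). *)
Definition iota11_injective : Prop :=
  forall z1 z2 : V2, Z11 z1 -> Z11 z2 -> piB11 (z1 - z2) -> B11 (z1 - z2).
Definition iota20_injective : Prop :=
  forall z1 z2 : V2, Z20 z1 -> Z20 z2 -> piB20 (z1 - z2) -> B20 (z1 - z2).

End AlmostComplexDeRham.

(* Every 2-form b splits as b = pi11 b + pi20 b. If b is exact and a := pi11 b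
   is closed, then a and a - b = - pi20 b are closed forms of the two types whose
   difference b is exact, so purity forces a to be exact; conversely, if a and b
   are closed of the two types with a - b exact, then a = pi11 (a - b) lies in
   pi11 B. Hence purity is the inclusion pi11 B cap Z11 <= B, which is both the
   nontrivial half of pi11 B cap Z11 = B11 and the injectivity of iota11.
   Replacing sigma by - sigma swaps the two types and leaves purity unchanged,
   which gives the (2,0),(0,2) statements. *)
From HB Require Import structures.
From mathcomp Require Import all_boot all_order all_algebra.
From Stdlib Require Import FunctionalExtensionality PropExtensionality.
Import Order.TTheory GRing.Theory Num.Theory.
Set Implicit Arguments. Unset Strict Implicit. Unset Printing Implicit Defensive.
Local Open Scope ring_scope.

Section ExactForms.
Variable R : realFieldType.
Variables (V1 V2 V3 : lmodType R).
Variables (d1 : {linear V1 -> V2}) (d2 : {linear V2 -> V3}).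

Lemma exactD a b : Bx d1 a -> Bx d1 b -> Bx d1 (a + b).
Proof. by move=> [e ->] [f ->]; exists (e + f); rewrite linearD. Qed.

Lemma exactN a : Bx d1 a -> Bx d1 (- a).
Proof. by move=> [e ->]; exists (- e); rewrite linearN. Qed.

Lemma exact_diff {a b} : Bx d1 (a - b) -> Bx d1 a <-> Bx d1 b.
Proof.
move=> ab; split=> ex.
  by rewrite -[b](subKr a); apply/exactD/exactN.
by rewrite -(subrK b a); apply: exactD.
Qed.

Lemma exact_closed (dd0 : forall e, d2 (d1 e) = 0) {a} : Bx d1 a -> Zc d2 a.
Proof. by move=> [e ->]; rewrite /Zc dd0. Qed.

End ExactForms.

Section Involution.
Variable R : realFieldType.
Variable V : lmodType R.
Variable sigma : {linear V -> V}.

Lemma half_double (a : V) : 2^-1 *: (a + a) = a.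
Proof. by rewrite -mulr2n -scaler_nat scalerA mulVf ?scale1r ?pnatr_eq0. Qed.

Lemma pi11D20 a : pi11 sigma a + pi20 sigma a = a.
Proof. by rewrite -scalerDr addrACA subrr addr0 half_double. Qed.

Lemma pi11B a b : pi11 sigma (a - b) = pi11 sigma a - pi11 sigma b.
Proof. by rewrite /pi11 linearB addrACA -opprD scalerBr. Qed.

Lemma pi11_Om11 a : Om11 sigma a -> pi11 sigma a = a.
Proof. by rewrite /pi11 => ->; apply: half_double. Qed.

Lemma pi11_Om20 a : Om20 sigma a -> pi11 sigma a = 0.
Proof. by rewrite /pi11 => ->; rewrite subrr scaler0. Qed.

Hypothesis sigma_invol : forall a, sigma (sigma a) = a.

Lemma Om20_pi20 a : Om20 sigma (pi20 sigma a).
Proof. by rewrite /Om20 /pi20 linearZ linearB sigma_invol -scalerN opprB. Qed.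

Lemma opp_fun_invol a : (\- sigma) ((\- sigma) a) = a.
Proof. by rewrite /= linearN opprK sigma_invol. Qed.

End Involution.

Section Purity.
Variable R : realFieldType.
Variables (V1 V2 V3 : lmodType R).
Variables (d1 : {linear V1 -> V2}) (d2 : {linear V2 -> V3}).
Variable sigma : {linear V2 -> V2}.

Definition piB11_Z11_exact : Prop :=
  forall a, Z11 d2 sigma a -> piB11 d1 sigma a -> Bx d1 a.

Lemma Z11B {a b} : Z11 d2 sigma a -> Z11 d2 sigma b -> Z11 d2 sigma (a - b).
Proof.
move=> [za sa] [zb sb]; split; first by rewrite /Zc linearB za zb subrr.
by rewrite /Om11 linearB sa sb.
Qed.

Lemma iota11_injectiveE : iota11_injective d1 d2 sigma <-> piB11_Z11_exact.
Proof.
split=> [inj a za pa | ex z1 z2 z1Z z2Z p].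
  have z0 : Z11 d2 sigma 0 by split; rewrite /Zc /Om11 linear0.
  by case: (inj a 0 za z0); rewrite subr0.
by have [z12Z om] := Z11B z1Z z2Z; split=> //; apply: ex.
Qed.

Hypothesis dd0 : forall e, d2 (d1 e) = 0.

Lemma piB11_Z11_eqE :
  (fun a => piB11 d1 sigma a /\ Z11 d2 sigma a) = B11 d1 sigma
  <-> piB11_Z11_exact.
Proof.
split=> [E a za pa | ex].
  by have [] : B11 d1 sigma a by rewrite -E.
apply: functional_extensionality => a; apply: propositional_extensionality.
split=> [[pa [za sa]] | [ba sa]]; first by split=> //; apply: ex.
split; first by exists a; rewrite pi11_Om11.
by split=> //; apply: exact_closed.
Qed.

Hypothesis sigma_invol : forall a, sigma (sigma a) = a.

Lemma Cinf_pureE : Cinf_pure d1 d2 sigma <-> piB11_Z11_exact.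
Proof.
split=> [pure a [za sa] [b [bB aE]] | ex a b [za sa] [zb sb] abB].
  subst a.
  have pi20E : pi11 sigma b - b = - pi20 sigma b.
    by rewrite -{2}(pi11D20 sigma b) opprD addrA subrr add0r.
  apply: (pure _ (pi11 sigma b - b)); [by split | | by rewrite subKr].
  split; first by rewrite /Zc linearB za (exact_closed dd0 bB) subrr.
  by rewrite pi20E /Om20 linearN Om20_pi20.
apply: ex; first by split.
by exists (a - b); rewrite pi11B pi11_Om11 // pi11_Om20 // subr0.
Qed.

End Purity.

Section Opposite.
Variable R : realFieldType.
Variables (V1 V2 V3 : lmodType R).
Variables (d1 : {linear V1 -> V2}) (d2 : {linear V2 -> V3}).
Variable sigma : {linear V2 -> V2}.

Lemma Om11_opp : Om11 (\- sigma) = Om20 sigma.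
Proof.
apply: functional_extensionality => a; apply: propositional_extensionality.
by rewrite /Om11 /Om20 /=; split=> e; apply: oppr_inj; rewrite opprK.
Qed.

Lemma Om20_opp : Om20 (\- sigma) = Om11 sigma.
Proof.
apply: functional_extensionality => a; apply: propositional_extensionality.
by rewrite /Om11 /Om20 /=; split=> [/oppr_inj | ->].
Qed.

Lemma Cinf_pure_opp : Cinf_pure d1 d2 (\- sigma) <-> Cinf_pure d1 d2 sigma.
Proof.
rewrite /Cinf_pure /Z11 /Z20 Om11_opp Om20_opp.
by split=> pure a b za zb abB; rewrite (exact_diff abB);
  apply: pure zb za _; rewrite -opprB; apply: exactN.
Qed.

Lemma piB20_Z20_eq_opp :
  ((fun a => piB20 d1 sigma a /\ Z20 d2 sigma a) = B20 d1 sigma)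
  = ((fun a => piB11 d1 (\- sigma) a /\ Z11 d2 (\- sigma) a)
     = B11 d1 (\- sigma)).
Proof. by rewrite /Z11 /Z20 /B11 /B20 Om11_opp. Qed.

Lemma iota20_injective_opp :
  iota20_injective d1 d2 sigma = iota11_injective d1 d2 (\- sigma).
Proof. by rewrite /iota11_injective /Z11 /Z20 /B11 /B20 Om11_opp. Qed.

End Opposite.

Theorem lemma2p9 (R : realFieldType) (V1 V2 V3 : lmodType R)
  (d1 : {linear V1 -> V2}) (d2 : {linear V2 -> V3})
  (sigma : {linear V2 -> V2})
  (dd0 : forall e : V1, d2 (d1 e) = 0)
  (sigma_invol : forall a : V2, sigma (sigma a) = a) :
  let pure := Cinf_pure d1 d2 sigma in
  let E11 := (fun a => piB11 d1 sigma a /\ Z11 d2 sigma a) = B11 d1 sigma in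
  let E20 := (fun a => piB20 d1 sigma a /\ Z20 d2 sigma a) = B20 d1 sigma in
  [/\ pure <-> E11, E11 <-> E20,
      pure <-> iota11_injective d1 d2 sigma
    & iota11_injective d1 d2 sigma <-> iota20_injective d1 d2 sigma].
Proof.
move=> pure E11 E20.
rewrite /pure /E11 /E20 piB20_Z20_eq_opp iota20_injective_opp.
have nsigma_invol := opp_fun_invol sigma_invol.
have pureE := Cinf_pureE dd0 sigma_invol.
have pureNE := Cinf_pureE dd0 nsigma_invol.
have pureN := Cinf_pure_opp d1 d2 sigma.
have E11E := piB11_Z11_eqE sigma dd0.
have E11NE := piB11_Z11_eqE (\- sigma) dd0.
have iota11E := iota11_injectiveE d1 d2 sigma.
have iota11NE := iota11_injectiveE d1 d2 (\- sigma).
by split; tauto.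
Qed.
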